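(* Let $k\ge 1$ be an integer and let $\Gamma=\mathbb{Z}_2\,\mathrm{wr}\,\mathbb{Z}^k$ be the restricted wreath product. Then $\Gamma$ has the property $R_\infty$: for every automorphism $\phi:\Gamma\to\Gamma$ the Reidemeister number $R(\phi)$ is infinite.
   Context: For an automorphism $\phi$ of a group $G$, the Reidemeister (twisted conjugacy) classes are the equivalence classes of the relation $g\sim hg\phi(h^{-1})$, $h,g\in G$; $R(\phi)$ denotes the number of these classes. A group has property $R_\infty$ if $R(\phi)=\infty$ for every automorphism $\phi$. The restricted wreath product $\mathbb{Z}_p\,\mathrm{wr}\,\mathbb{Z}^k$ is the semidirect product $\left(\bigoplus_{x\in\mathbb{Z}^k}(\mathbb{Z}_p)_{(x)}\right)\rtimes_\alpha\mathbb{Z}^k$, where each $(\mathbb{Z}_p)_{(x)}\cong\mathbb{Z}_p$ is generated by an element $\delta_x$, the direct sum consists of finitely supported elements, and $\alpha(y)(\delta_x)=\delta_{y+x}$ for $y\in\mathbb{Z}^k$. *)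

From HB Require Import structures.
From mathcomp Require Import all_boot all_order all_algebra.
From mathcomp Require Import finmap.
Set Implicit Arguments. Unset Strict Implicit. Unset Printing Implicit Defensive.
Import GRing.Theory.
Local Open Scope ring_scope.
Local Open Scope fset_scope.

Definition Zk (k : nat) := 'rV[int]_k.

(* The direct sum  (+)_{x in Z^k} Z_2  is identified with the group of finite
   subsets of Z^k under symmetric difference: an element sum_{x in A} delta_x
   (each coefficient in Z_2 = {0,1}) corresponds to its support A. *)
Definition base (k : nat) := {fset Zk k}.

Definition symdiff (k : nat) (A B : base k) : base k := (A `\` B) `|` (B `\` A).

Definition shift (k : nat) (y : Zk k) (A : base k) : base k := [fset (y + x)%R | x in A].

Definition wr2 (k : nat) := (base k * Zk k)%type.

Definition wr_mul (k : nat) (g h : wr2 k) : wr2 k :=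
  (symdiff g.1 (shift g.2 h.1), (g.2 + h.2)%R).
Definition wr_one (k : nat) : wr2 k := (fset0, 0%R).
Definition wr_inv (k : nat) (g : wr2 k) : wr2 k := (shift (- g.2)%R g.1, (- g.2)%R).

Definition wr_automorphism (k : nat) (phi : wr2 k -> wr2 k) : Prop :=
  bijective phi /\ forall g h, phi (wr_mul g h) = wr_mul (phi g) (phi h).

Definition reidemeister_rel (k : nat) (phi : wr2 k -> wr2 k) (g g' : wr2 k) : Prop :=
  exists h, g' = wr_mul (wr_mul h g) (phi (wr_inv h)).

Definition reidemeister_finite (k : nat) (phi : wr2 k -> wr2 k) : Prop :=
  exists s : seq (wr2 k), forall g, exists2 x, x \in s & reidemeister_rel phi x g.

Definition reidemeister_infinite (k : nat) (phi : wr2 k -> wr2 k) : Prop :=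
  ~ reidemeister_finite phi.

(* The lamp configurations (A, 0) are exactly the elements g with g * g = 1,
   so an automorphism phi preserves them and induces an automorphism of Z^k,
   given by an integer matrix M; twisted conjugation by h then adds
   h.2 *m (1 - M) to the Z^k-coordinate.

   If det (1 - M) = 0, a rational linear form vanishing on the image of 1 - M
   is constant on Reidemeister classes and separates the elements (fset0, n e_j).

   Otherwise phi sends the lamp at x to the configuration Q translated by x M.
   As phi is onto, Q is a unit of the group ring F_2[Z^k] twisted by M, hence
   (ordering Z^k lexicographically) a single lamp z: phi permutes the lamps by
   sigma x = x M + z.  Lamp configurations b, b' can only be twisted conjugate
   through a lamp configuration C, and then b' = b + C + sigma(C); so for every
   sigma-invariant set S the parity of |b /\ S| is a class invariant.  The sets
   {x | N divides x - sigma x} provide such invariants, and they separate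
   infinitely many single lamps. *)

From HB Require Import structures.
From mathcomp Require Import all_boot all_order all_algebra.
From mathcomp Require Import finmap zify.
From Stdlib Require Import ClassicalEpsilon.
Set Implicit Arguments. Unset Strict Implicit. Unset Printing Implicit Defensive.
Import Order.TTheory GRing.Theory Num.Theory.
Local Open Scope fset_scope.
Local Open Scope ring_scope.

Lemma seq_max (T : eqType) (le : rel T) : total le -> transitive le ->
  forall (s : seq T) x, x \in s -> exists2 m, m \in s & {in s, forall y, le y m}.
Proof.
move=> le_tot le_tr s x xs; pose ge a b := le b a.
have ge_tot : total ge by move=> a b; exact: le_tot.
have ge_tr : transitive ge by move=> b a c ab bc; exact: le_tr bc ab.
have sorted_s := sort_sorted ge_tot s; have mem_s := mem_sort ge s.
case: (sort ge s) sorted_s mem_s => [|m t] sorted_s mem_s; first by rewrite -mem_s in xs.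
exists m => [|y]; first by rewrite -mem_s mem_head.
rewrite -mem_s inE => /predU1P[->|yt]; first by have := le_tot m m; rewrite orbb.
by have /allP := order_path_min ge_tr sorted_s; apply.
Qed.

Lemma int_additive_mulmx m n (f : 'rV[int]_m -> 'rV[int]_n) :
  zmod_morphism f -> forall u, f u = u *m \matrix_i f (delta_mx 0 i).
Proof.
move=> fB u; pose F : {additive _ -> _} := HB.pack f (GRing.isZmodMorphism.Build _ _ f fB).
rewrite -[f]/(F : _ -> _) {1}(row_sum_delta u) raddf_sum mulmx_sum_row.
by apply: eq_bigr => i _; rewrite rowK -[u 0 i]intz !scaler_int raddfMz.
Qed.

Lemma det_neq0_mulmx_eq0 (R : idomainType) n (A : 'M[R]_n) (y : 'rV_n) :
  \det A != 0 -> y *m A = 0 -> y = 0.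
Proof.
move=> detA yA0; apply/rowP => i; apply/eqP.
have /rowP/(_ i)/eqP := congr1 (mulmx^~ (\adj A)) yA0.
by rewrite mul0mx -mulmxA mul_mx_adj mul_mx_scalar !mxE mulf_eq0 (negbTE detA).
Qed.

Lemma ndvdz_large_affine (d e c : int) (s t : nat) : d != 0 -> 0 <= e <= 1 -> c != 0 ->
  (2 <= s)%N -> ((2 * `|c| + 1) * s <= t)%N -> ~~ (t%:Z * d - e %| (s%:Z * d - e) * c)%Z.
Proof.
move=> d0 e01 c0 s2 ts; apply/negP => /dvdn_leq.
have pos : (0 < absz ((s%:Z * d - e) * c)%R)%N by rewrite absz_gt0 mulf_neq0 //; nia.
by move=> /(_ pos); apply/negP; rewrite -ltnNge; nia.
Qed.

Definition dvd_row k (N : int) (w : Zk k) : bool := [forall i, w 0 i \in dvdz N].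

Lemma dvd_rowP k N (w : Zk k) : reflect (exists c : Zk k, w = N *: c) (dvd_row N w).
Proof.
apply: (iffP forallP) => [N_w|[c ->] i]; last by rewrite mxE dvdz_mulr.
by exists (\row_i divz (w 0 i) N); apply/rowP => i; rewrite !mxE mulrC divzK.
Qed.

Section GroupEndomorphism.
Local Open Scope group_scope.
Variables (G : groupType) (f : G -> G).
Hypothesis fM : {morph f : x y / x * y}.

Lemma endo1 : f 1 = 1.
Proof. by apply: (@mulgI _ (f 1)); rewrite -fM !mulg1. Qed.

Lemma endoV x : f x^-1 = (f x)^-1.
Proof. by apply/esym/mulg1_eq; rewrite -fM mulgV endo1. Qed.

Lemma twisted_conj_common r x y :
  (exists h, x = h * r * f h^-1) -> (exists h, y = h * r * f h^-1) ->
  exists h, y = h * x * f h^-1.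
Proof.
move=> [h ->] [h' ->]; exists (h' * h^-1).
by rewrite invgM invgK fM !endoV !mulgA !mulgVK.
Qed.

End GroupEndomorphism.

Section SymmetricDifference.
Variable k : nat.
Implicit Types (A B C : base k) (x y : Zk k).

Lemma in_symdiff A B x : (x \in symdiff A B) = (x \in A) (+) (x \in B).
Proof. by rewrite /symdiff !inE; case: (x \in A); case: (x \in B). Qed.

Lemma symdiffA : associative (@symdiff k).
Proof. by move=> A B C; apply/fsetP => x; rewrite !in_symdiff addbA. Qed.

Lemma symdiffC : commutative (@symdiff k).
Proof. by move=> A B; apply/fsetP => x; rewrite !in_symdiff addbC. Qed.

Lemma symdiff0l : left_id fset0 (@symdiff k).
Proof. by move=> A; apply/fsetP => x; rewrite in_symdiff inE. Qed.

Lemma symdiff0r : right_id fset0 (@symdiff k).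
Proof. by move=> A; rewrite symdiffC symdiff0l. Qed.

Lemma symdiffvv A : symdiff A A = fset0.
Proof. by apply/fsetP => x; rewrite in_symdiff inE addbb. Qed.

Lemma in_shift y A x : (x \in shift y A) = (x - y \in A).
Proof.
apply/imfsetP/idP => [[a aA ->]|xA]; first by rewrite addrC addKr.
by exists (x - y) => //; rewrite addrC subrK.
Qed.

Lemma shift0 A : shift 0 A = A.
Proof. by apply/fsetP => x; rewrite in_shift subr0. Qed.

Lemma shift_fset0 y : shift y fset0 = fset0.
Proof. by apply/fsetP => x; rewrite in_shift !inE. Qed.

Lemma shiftD y y' A : shift y (shift y' A) = shift (y + y') A.
Proof. by apply/fsetP => x; rewrite !in_shift opprD addrA. Qed.

Lemma shift_symdiff y : {morph shift y : A B / symdiff A B}.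
Proof. by move=> A B; apply/fsetP => x; rewrite !(in_shift, in_symdiff). Qed.

Lemma shift_fset1 y x : shift y [fset x] = [fset y + x].
Proof. by apply/fsetP => v; rewrite in_shift !inE subr_eq addrC. Qed.

Lemma symdiff_morph_eq (F G : base k -> bool) :
  {morph F : A B / symdiff A B >-> A (+) B} ->
  {morph G : A B / symdiff A B >-> A (+) B} ->
  (forall x, F [fset x] = G [fset x]) -> F =1 G.
Proof.
move=> FD GD F1G1 C; elim/fset1U_rect: C => [|x X xX IH].
  by have := FD fset0 fset0; have := GD fset0 fset0; rewrite symdiffvv !addbb => -> ->.
have -> : x |` X = symdiff [fset x] X.
  apply/fsetP => v; rewrite in_symdiff !inE.
  by case: eqP => [->|]; rewrite ?(negbTE xX).
by rewrite FD GD F1G1 IH.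
Qed.

Definition parity (S : pred (Zk k)) A : bool := odd #|` [fset x in A | S x]|.

Lemma odd_card_symdiff A B : odd #|` symdiff A B| = odd #|` A| (+) odd #|` B|.
Proof.
have := cardfsUI (A `\` B) (B `\` A).
have -> : (A `\` B) `&` (B `\` A) = fset0.
  by apply/fsetP => x; rewrite !inE; case: (x \in A); case: (x \in B).
rewrite cardfs0 addn0 -/(symdiff A B) => ->.
rewrite -(cardfsID B A) -(cardfsID A B) fsetIC !oddD.
by case: (odd _); case: (odd _); case: (odd _).
Qed.

Lemma parity_symdiff S : {morph parity S : A B / symdiff A B >-> A (+) B}.
Proof.
move=> A B; rewrite /parity -odd_card_symdiff; congr (odd #|` _|).
apply/fsetP => x; rewrite !(inE, in_symdiff).
by case: (x \in A); case: (x \in B); case: (S x).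
Qed.

Lemma parity1 S x : parity S [fset x] = S x.
Proof.
rewrite /parity; have -> : [fset y in [fset x] | S y] = if S x then [fset x] else fset0.
  apply/fsetP => y; rewrite !inE.
  by have [->|yx] := eqVneq y x; case: (S x); rewrite ?inE ?eqxx ?(negbTE yx).
by case: (S x); rewrite ?cardfs1 ?cardfs0.
Qed.

End SymmetricDifference.

Section WreathGroup.
Variable k : nat.

Lemma wr_mulA : associative (@wr_mul k).
Proof.
move=> [A a] [B b] [C c]; rewrite /wr_mul /=.
by rewrite shift_symdiff shiftD symdiffA addrA.
Qed.

Lemma wr_mul1g : left_id (wr_one k) (@wr_mul k).
Proof. by move=> [A a]; rewrite /wr_mul /= shift0 symdiff0l add0r. Qed.

Lemma wr_mulg1 : right_id (wr_one k) (@wr_mul k).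
Proof. by move=> [A a]; rewrite /wr_mul /= shift_fset0 symdiff0r addr0. Qed.

Lemma wr_mulVg : left_inverse (wr_one k) (@wr_inv k) (@wr_mul k).
Proof. by move=> [A a]; rewrite /wr_mul /wr_inv /= symdiffvv addNr. Qed.

Lemma wr_mulgV : right_inverse (wr_one k) (@wr_inv k) (@wr_mul k).
Proof.
by move=> [A a]; rewrite /wr_mul /wr_inv /= shiftD !subrr shift0 symdiffvv.
Qed.

End WreathGroup.

HB.instance Definition _ k := Choice.on (wr2 k).
HB.instance Definition _ k :=
  isGroup.Build (wr2 k) (@wr_mulA k) (@wr_mul1g k) (@wr_mulg1 k) (@wr_mulVg k) (@wr_mulgV k).

Lemma wr_mulE k (g h : wr2 k) : (g * h)%g = wr_mul g h. Proof. by []. Qed.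
Lemma wr_invE k (g : wr2 k) : (g^-1)%g = wr_inv g. Proof. by []. Qed.

Section WreathElements.
Variable k : nat.

Definition lamps (A : base k) : wr2 k := (A, 0).
Definition walk (y : Zk k) : wr2 k := (fset0, y).

Lemma wr_sqr_eq1 (g : wr2 k) : (g * g = 1)%g <-> g.2 = 0.
Proof.
case: g => A y; split => [[_ /rowP y2]|/= ->]; last first.
  by rewrite wr_mulE /wr_mul /= shift0 symdiffvv addr0.
apply/rowP => i; have /eqP := y2 i; by rewrite !mxE -mulr2n mulrn_eq0 => /eqP.
Qed.

Lemma lamps_fst (g : wr2 k) : g.2 = 0 -> lamps g.1 = g.
Proof. by case: g => A y /= ->. Qed.

Lemma lampsM A B : (lamps A * lamps B)%g = lamps (symdiff A B).
Proof. by rewrite wr_mulE /wr_mul /= shift0 addr0. Qed.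

Lemma lampsV A : (lamps A)^-1%g = lamps A.
Proof. by rewrite wr_invE /wr_inv /= oppr0 shift0. Qed.

Lemma walkB y y' : walk (y - y') = (walk y * (walk y')^-1)%g.
Proof. by rewrite wr_mulE wr_invE /wr_mul /wr_inv /= !shift_fset0 symdiff0r. Qed.

Lemma lamps_walk (g : wr2 k) : g = (lamps g.1 * walk g.2)%g.
Proof. by case: g => A y; rewrite wr_mulE /wr_mul /= shift_fset0 symdiff0r add0r. Qed.

Lemma lamps_conj (g : wr2 k) A : (g * lamps A * g^-1)%g = lamps (shift g.2 A).
Proof.
case: g => P y; rewrite !(wr_mulE, wr_invE) /wr_mul /wr_inv /lamps /=.
by rewrite shiftD addr0 subrr shift0 symdiffC symdiffA symdiffvv symdiff0l.
Qed.

Lemma wr_mul_snd (g h : wr2 k) : (g * h)%g.2 = g.2 + h.2.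
Proof. by []. Qed.

Lemma wr_inv_snd (g : wr2 k) : (g^-1)%g.2 = - g.2.
Proof. by []. Qed.

End WreathElements.

Fixpoint lex_on k (r : seq 'I_k) (a b : Zk k) : bool :=
  if r is i :: r' then (a 0 i < b 0 i) || (a 0 i == b 0 i) && lex_on r' a b
  else true.

Section LexOrder.
Variables (k : nat) (r : seq 'I_k).
Implicit Types a b c : Zk k.

Lemma lex_on_total : total (lex_on r).
Proof.
move=> a b; elim: r => //= i r' IH.
by case: (ltgtP (a 0 i) (b 0 i)) => //= ->; rewrite eqxx.
Qed.

Lemma lex_on_trans : transitive (lex_on r).
Proof.
move=> b a c; elim: r => //= i r' IH.
case: (ltgtP (a 0 i) (b 0 i)) => //= [ab|->] /=.
- case: (ltgtP (b 0 i) (c 0 i)) => //= [bc|<-] _; first by rewrite (lt_trans ab bc).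
  by rewrite ab.
- by move=> H; case: (ltgtP (b 0 i) (c 0 i)) => //= _; exact: IH.
Qed.

Lemma lex_on_anti a b : lex_on r a b -> lex_on r b a -> {in r, forall i, a 0 i = b 0 i}.
Proof.
elim: r => //= i r' IH.
case: (ltgtP (a 0 i) (b 0 i)) => //= ab ab' ba' j; rewrite inE => /predU1P[->//|].
exact: IH.
Qed.

Lemma lex_onD2r a b c : lex_on r a b -> lex_on r (a + c) (b + c).
Proof.
elim: r => //= i r' IH; rewrite !mxE ltrD2r (inj_eq (addIr _)).
by case: (_ < _) => //= /andP [-> /IH ->].
Qed.

End LexOrder.

Definition lex k : rel (Zk k) := lex_on (enum 'I_k).

Lemma lex_total k : total (@lex k). Proof. exact: lex_on_total. Qed.

Lemma lex_trans k : transitive (@lex k). Proof. exact: lex_on_trans. Qed.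

Lemma lexD2r k (a b c : Zk k) : lex a b -> lex (a + c) (b + c).
Proof. exact: lex_onD2r. Qed.

Lemma lex_anti k : antisymmetric (@lex k).
Proof.
move=> a b /andP [ab ba]; apply/rowP => i.
exact: (lex_on_anti ab ba (mem_enum _ i)).
Qed.

(* The hypothesis [CQ_unit] says that C * Q = 1 in the group ring F_2[Z^k]
   twisted by f.  For a translation-invariant total order, the product of the
   top terms of C and Q cannot cancel, so it is the only term of C * Q. *)
Section TwistedUnit.
Variables (k : nat) (le : rel (Zk k)).
Hypotheses (le_total : total le) (le_trans : transitive le).
Hypotheses (le_anti : antisymmetric le) (leD2r : forall a b c, le a b -> le (a + c) (b + c)).
Variables (f : Zk k -> Zk k) (C Q : base k).
Hypothesis f_inj : injective f.
Hypothesis CQ_unit : forall v, parity (fun x => v - f x \in Q) C = (v == 0).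

Lemma twisted_unit_top : exists xM qM, [/\ xM \in C, qM \in Q,
  {in C, forall x, le (f x) (f xM)}, {in Q, forall q, le q qM} & f xM + qM = 0].
Proof.
have : [fset x in C | 0 - f x \in Q] != fset0.
  by apply/eqP => CQ0; have := CQ_unit 0; rewrite /parity CQ0 cardfs0 eqxx.
case/fset0Pn => x0; rewrite !inE => /andP[x0C q0Q].
have f_tr : transitive (fun a b => le (f a) (f b)) by move=> b a c; exact: le_trans.
have [xM xMC xM_max] := seq_max (fun a b => le_total (f a) (f b)) f_tr x0C.
have [qM qMQ qM_max] := seq_max le_total le_trans q0Q.
exists xM, qM; split => //.
have top_only : [fset x in C | f xM + qM - f x \in Q] = [fset xM].
  apply/fsetP => x; rewrite !inE; apply/andP/eqP => [[xC qQ]|->]; last first.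
    by rewrite xMC addrC addKr.
  set q := f xM + qM - f x in qQ.
  have sum_eq : f x + q = f xM + qM by rewrite /q addrC subrK.
  have : le (f x + qM) (f xM + qM) by apply: leD2r; exact: xM_max.
  have : le (f x + q) (f x + qM) by rewrite ![f x + _]addrC; apply: leD2r; exact: qM_max.
  rewrite sum_eq => le1 le2; apply: f_inj; apply: (addIr qM).
  by apply: le_anti; rewrite le1 le2.
by have := CQ_unit (f xM + qM); rewrite /parity top_only cardfs1 => /esym/eqP.
Qed.

End TwistedUnit.

Lemma twisted_unit_singleton k (f : Zk k -> Zk k) (C Q : base k) : injective f ->
  (forall v, parity (fun x => v - f x \in Q) C = (v == 0)) -> exists z, Q = [fset z].
Proof.
move=> f_inj CQ_unit.
have [xM [qM [_ qMQ xM_max qM_max sumM]]] :=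
  twisted_unit_top (@lex_total k) (@lex_trans k) (@lex_anti k) (@lexD2r k) f_inj CQ_unit.
have ge_anti : antisymmetric (fun a b : Zk k => lex b a).
  by move=> a b ba_ab; apply: lex_anti; rewrite andbC.
have [xm [qm [xmC qmQ _ qm_min summ]]] := twisted_unit_top (le := fun a b => lex b a)
  (fun a b => lex_total b a) (fun b a c ab bc => lex_trans bc ab)
  ge_anti (fun a b c => @lexD2r k b a c) f_inj CQ_unit.
have qm_qM : qm = qM.
  apply: (addrI (f xm)); apply: lex_anti; apply/andP; split.
  - by rewrite ![f xm + _]addrC; apply: lexD2r; exact: qM_max.
  - by rewrite summ -sumM; apply: lexD2r; exact: xM_max.
exists qM; apply/fsetP => q; rewrite inE; apply/idP/eqP => [qQ|->//].
by apply: lex_anti; apply/andP; split; [exact: qM_max | rewrite -qm_qM; exact: qm_min].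
Qed.

Lemma reidemeister_relE k (phi : wr2 k -> wr2 k) r g :
  reidemeister_rel phi r g <-> exists h, g = (h * r * phi h^-1)%g.
Proof. by []. Qed.

Section Homomorphism.
Variables (k : nat) (phi : wr2 k -> wr2 k).
Hypothesis phiM : {morph phi : g h / (g * h)%g}.

Lemma hom_lamps_snd A : (phi (lamps A)).2 = 0.
Proof. by apply/wr_sqr_eq1; rewrite -phiM (proj2 (wr_sqr_eq1 (lamps A))) ?(endo1 phiM). Qed.

Definition hom_mx : 'M[int]_k := \matrix_i (phi (walk (delta_mx 0 i))).2.

Lemma hom_snd g : (phi g).2 = g.2 *m hom_mx.
Proof.
rewrite {1}(lamps_walk g) phiM wr_mul_snd hom_lamps_snd add0r.
apply: (int_additive_mulmx (f := fun y => (phi (walk y)).2)) => y y' /=.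
by rewrite walkB phiM (endoV phiM).
Qed.

Definition hom_lamps C : base k := (phi (lamps C)).1.

Lemma hom_lampsE C : phi (lamps C) = lamps (hom_lamps C).
Proof. by rewrite lamps_fst ?hom_lamps_snd. Qed.

Lemma hom_lamps_symdiff : {morph hom_lamps : A B / symdiff A B}.
Proof. by move=> A B; rewrite /hom_lamps -lampsM phiM !hom_lampsE lampsM. Qed.

Lemma hom_lamps1 x : hom_lamps [fset x] = shift (x *m hom_mx) (hom_lamps [fset 0]).
Proof.
have conj_x : lamps [fset x] = (walk x * lamps [fset 0] * (walk x)^-1)%g.
  by rewrite lamps_conj shift_fset1 addr0.
by rewrite {1}/hom_lamps conj_x !phiM (endoV phiM) hom_lampsE lamps_conj hom_snd.
Qed.

Lemma in_hom_lamps C v :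
  (v \in hom_lamps C) = parity (fun x => v - x *m hom_mx \in hom_lamps [fset 0]) C.
Proof.
apply: (symdiff_morph_eq (F := fun C => v \in hom_lamps C)) => [A B|A B|x].
- by rewrite hom_lamps_symdiff in_symdiff.
- exact: parity_symdiff.
- by rewrite hom_lamps1 in_shift parity1.
Qed.

Lemma reidemeister_snd g h :
  (h * g * phi h^-1)%g.2 = g.2 + h.2 *m (1%:M - hom_mx).
Proof.
by rewrite !wr_mul_snd hom_snd wr_inv_snd mulNmx mulmxBr mulmx1 addrA (addrC h.2).
Qed.

Lemma reidemeister_rel_common r g g' : reidemeister_rel phi r g ->
  reidemeister_rel phi r g' -> reidemeister_rel phi g g'.
Proof. exact: twisted_conj_common. Qed.

End Homomorphism.

Lemma reidemeister_infinite_family k (phi : wr2 k -> wr2 k) (F : nat -> wr2 k) :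
  {morph phi : g h / (g * h)%g} ->
  (forall a b, (a < b)%N -> ~ reidemeister_rel phi (F a) (F b)) ->
  reidemeister_infinite phi.
Proof.
move=> phiM F_sep [s s_covers].
have rep g : {x | x \in s /\ reidemeister_rel phi x g}.
  by apply: constructive_indefinite_description; have [x] := s_covers g; exists x.
pose rho a := sval (rep (F a)).
have rho_inj : injective rho.
  move=> a b rho_ab; have [_ ra] := svalP (rep (F a)); have [_ rb] := svalP (rep (F b)).
  rewrite -/(rho a) rho_ab in ra.
  have [ab|ba|//] := ltngtP a b.
  - by case: (F_sep a b ab); exact: reidemeister_rel_common ra rb.
  - by case: (F_sep b a ba); exact: reidemeister_rel_common rb ra.
have rho_s : {subset map rho (iota 0 (size s).+1) <= s}.
  by move=> _ /mapP[a _ ->]; have [] := svalP (rep (F a)).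
have rho_uniq : uniq (map rho (iota 0 (size s).+1)) by rewrite map_inj_uniq ?iota_uniq.
by have := uniq_leq_size rho_uniq rho_s; rewrite size_map size_iota ltnn.
Qed.

Section Automorphism.
Variables (k : nat) (phi : wr2 k -> wr2 k).
Hypotheses (phiM : {morph phi : g h / (g * h)%g}) (phi_bij : bijective phi).
Local Notation M := (@hom_mx k phi).

Lemma hom_mx_inj : injective (fun y : 'rV[int]_k => y *m M).
Proof.
move=> y y' /= yMy'; apply/eqP; rewrite -subr_eq0; apply/eqP.
have /wr_sqr_eq1 : (phi (walk (y - y'))).2 = 0 by rewrite hom_snd // mulmxBl yMy' subrr.
by rewrite -phiM -(endo1 phiM) => /(bij_inj phi_bij)/wr_sqr_eq1.
Qed.

Lemma hom_mx_surj (y : Zk k) : exists x : Zk k, x *m M = y.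
Proof. by case: phi_bij => psi _ psiK; exists (psi (walk y)).2; rewrite -hom_snd ?psiK. Qed.

Lemma dvd_row_hom_mx N (w : Zk k) : dvd_row N (w *m M) = dvd_row N w.
Proof.
apply/dvd_rowP/dvd_rowP => [[c wM]|[c ->]]; last by exists (c *m M); rewrite scalemxAl.
have [c' c'M] := hom_mx_surj c; exists c'; apply: hom_mx_inj.
by rewrite /= wM -c'M scalemxAl.
Qed.

Lemma hom_lamps_singleton : exists z, hom_lamps phi [fset 0] = [fset z].
Proof.
have [psi psiK phiK] := phi_bij; set g := psi (lamps [fset 0]).
have g2 : g.2 = 0 by apply: hom_mx_inj; rewrite /= mul0mx -hom_snd // phiK.
have C_unit : hom_lamps phi g.1 = [fset 0].
  by rewrite /hom_lamps lamps_fst // phiK.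
apply: (twisted_unit_singleton (C := g.1) hom_mx_inj) => v.
by rewrite -in_hom_lamps // C_unit inE.
Qed.

End Automorphism.

Section LampPermutation.
Variables (k : nat) (phi : wr2 k -> wr2 k) (z : Zk k).
Hypothesis phiM : {morph phi : g h / (g * h)%g}.
Hypothesis lamp0 : hom_lamps phi [fset 0] = [fset z].
Local Notation M := (@hom_mx k phi).

Definition lamp_perm (x : Zk k) : Zk k := x *m M + z.
Definition lamp_disp (x : Zk k) : Zk k := x - lamp_perm x.

Lemma hom_lamps1_perm x : hom_lamps phi [fset x] = [fset lamp_perm x].
Proof. by rewrite (hom_lamps1 phiM) lamp0 shift_fset1. Qed.

Lemma lamp_dispE x : lamp_disp x = x *m (1%:M - M) - z.
Proof. by rewrite /lamp_disp /lamp_perm mulmxBr mulmx1 opprD addrA. Qed.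

Lemma lamp_permB x y : lamp_perm x - lamp_perm y = (x - y) *m M.
Proof. by rewrite /lamp_perm [in X in _ - X]addrC addrKA mulmxBl. Qed.

Lemma lamp_disp_perm x : lamp_disp (lamp_perm x) = lamp_disp x *m M.
Proof. by rewrite /lamp_disp lamp_permB. Qed.

Lemma parity_hom_lamps (S : pred (Zk k)) : (forall x, S (lamp_perm x) = S x) ->
  forall C, parity S (hom_lamps phi C) = parity S C.
Proof.
move=> S_perm; apply: (symdiff_morph_eq (F := fun C => parity S (hom_lamps phi C))).
- by move=> A B; rewrite hom_lamps_symdiff // parity_symdiff.
- exact: parity_symdiff.
- by move=> x; rewrite hom_lamps1_perm !parity1.
Qed.

Lemma reidemeister_lamps_parity (S : pred (Zk k)) b b' :
  \det (1%:M - M) != 0 -> (forall x, S (lamp_perm x) = S x) ->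
  reidemeister_rel phi (lamps b) (lamps b') -> parity S b' = parity S b.
Proof.
move=> detA S_perm /reidemeister_relE[h rel_bb'].
have h2 : h.2 = 0.
  apply: det_neq0_mulmx_eq0 detA _; apply: (addrI (lamps b).2).
  by rewrite addr0 -reidemeister_snd // -rel_bb'.
move: rel_bb'; rewrite -(lamps_fst h2) lampsV (hom_lampsE phiM) !lampsM => -[->].
by rewrite !parity_symdiff parity_hom_lamps // addbAC addbb.
Qed.

End LampPermutation.

Lemma reidemeister_infinite_det_eq0 k (phi : wr2 k -> wr2 k) :
  {morph phi : g h / (g * h)%g} -> \det (1%:M - hom_mx phi) = 0 ->
  reidemeister_infinite phi.
Proof.
move=> phiM; set A := 1%:M - hom_mx phi => detA0.
have /det0P[v v0 vA] : \det (map_mx intr A)^T == 0 :> rat.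
  by rewrite det_tr det_map_mx detA0 rmorph0.
have /rV0Pn[j vj] := v0.
have Av0 : map_mx intr A *m v^T = 0 by rewrite -[LHS]trmxK trmx_mul trmxK vA trmx0.
pose l (y : Zk k) : rat := (map_mx intr y *m v^T) 0 0.
have l_rel g g' : reidemeister_rel phi g g' -> l g'.2 = l g.2.
  move=> /reidemeister_relE[h ->]; rewrite reidemeister_snd // /l map_mxD mulmxDl.
  by rewrite map_mxM -mulmxA Av0 mulmx0 addr0.
apply: (@reidemeister_infinite_family _ _ (fun n => walk (n%:Z *: delta_mx 0 j)) phiM).
move=> a b ab /l_rel; rewrite /l /= !map_mxZ map_delta_mx -!scalemxAl -!rowE !mxE.
by move/(mulIf vj)/eqP; rewrite eqr_nat gtn_eqF.
Qed.

Lemma reidemeister_infinite_det_neq0 k (phi : wr2 k -> wr2 k) : (0 < k)%N ->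
  {morph phi : g h / (g * h)%g} -> bijective phi ->
  \det (1%:M - hom_mx phi) != 0 -> reidemeister_infinite phi.
Proof.
move=> k_gt0 phiM phi_bij detA.
have [z lamp0] := hom_lamps_singleton phiM phi_bij.
have [e [w [e01 zw w0]]] : exists e w, [/\ 0 <= e <= 1, z = e *: w & w != 0 :> Zk k].
  have [->|z0] := eqVneq z 0; last by exists 1, z; rewrite scale1r.
  exists 0, (delta_mx 0 (Ordinal k_gt0)); rewrite scale0r; split => //.
  by apply/rV0Pn; exists (Ordinal k_gt0); rewrite mxE !eqxx oner_eq0.
have /rV0Pn[j wj] := w0.
set A := 1%:M - hom_mx phi in detA; set d := \det A in detA.
pose W := absz (w 0 j); pose T t := ((2 * W + 1) ^ t.+1)%N.
(* N t grows so fast that N b does not divide N a *: w for a < b. *)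
pose x t : Zk k := (T t)%:Z *: (w *m \adj A).
pose N t := (T t)%:Z * d - e.
have disp_x t : lamp_disp phi z (x t) = N t *: w.
  by rewrite lamp_dispE -scalemxAl -mulmxA mul_adj_mx mul_mx_scalar scalerA zw -scalerBl.
pose S t := [pred y | dvd_row (N t) (lamp_disp phi z y)].
have S_perm t y : S t (lamp_perm phi z y) = S t y by rewrite /= lamp_disp_perm dvd_row_hom_mx.
apply: (@reidemeister_infinite_family _ _ (fun t => lamps [fset x t]) phiM) => a b ab.
move/(reidemeister_lamps_parity phiM lamp0 detA (S_perm b)); rewrite !parity1 /= !disp_x.
have -> : dvd_row (N b) (N b *: w) by apply/dvd_rowP; exists w.
move=> /esym/forallP/(_ j); rewrite mxE; apply/negP; apply: ndvdz_large_affine => //.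
- have W_gt0 : (0 < W)%N by rewrite absz_gt0.
  rewrite /T expnS; set P := (_ ^ _)%N.
  have P_gt0 : (0 < P)%N by rewrite expn_gt0 addn1.
  nia.
- by rewrite /T -expnS leq_pexp2l // addn1.
Qed.

Theorem theorem2p3 (k : nat) (hk : (1 <= k)%N) :
  forall phi : wr2 k -> wr2 k, wr_automorphism phi -> reidemeister_infinite phi.
Proof.
move=> phi [phi_bij phiM].
have [detA0|detA] := eqVneq (\det (1%:M - hom_mx phi)) 0.
- exact: reidemeister_infinite_det_eq0 phiM detA0.
- exact: reidemeister_infinite_det_neq0 hk phiM phi_bij detA.
Qed.
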